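(* A lattice $L$ is isomorphic to a lattice of subclones (i.e., to the lattice $\mathrm{Sb}(F)$ of all subclones of some clone $F$ on some set $A$) if and only if $L$ is isomorphic to the lattice of subalgebras of a block algebra.
   Context: Finitary operations on $A$ include nullary ones. A clone on $A$ is a set of finitary operations on $A$ containing all projections $p^{(n)}_i(a_1,\dots,a_n)=a_i$, closed under composition ($f$ $n$-ary, $g_1,\dots,g_n$ $k$-ary, $k\ge0$, gives $\mathbf a\mapsto f(g_1(\mathbf a),\dots,g_n(\mathbf a))$) and under restriction (if an $n$-ary $f$, $n\ge1$, does not depend on its last argument, the $(n-1)$-ary $g(a_1,\dots,a_{n-1})=f(a_1,\dots,a_{n-1},b)$ belongs to it). A subclone of a clone $F$ on $A$ is a subset of $F$ that is itself a clone on $A$; $\mathrm{Sb}(F)$ is ordered by inclusion. Let $\omega=\{1,2,\dots\}$. The top extension of $f:A^n\to A$ is $f^\top:A^\omega\to A$, $f^\top(s)=f(s_1,\dots,s_n)$. The full block algebra on $A$ has universe $\{f^\top: f\text{ finitary on }A\}$, nullary operations $\mathsf e_i(s)=s_i$ ($i\ge1$) and $(n+1)$-ary operations $q_n(\varphi,\psi_1,\dots,\psi_n)(s)=\varphi(s[\psi_1(s),\dots,\psi_n(s)])$ ($n\ge0$), where $s[b_1,\dots,b_n]$ replaces the first $n$ entries of $s$ by $b_1,\dots,b_n$. A block algebra (on $A$) is a subalgebra of the full block algebra on $A$. *)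

From mathcomp Require Import all_boot all_order.
Set Implicit Arguments. Unset Strict Implicit. Unset Printing Implicit Defensive.

Definition operation (A : Type) : Type := {n : nat & ('I_n -> A) -> A}.

Definition mk_op (A : Type) (n : nat) (f : ('I_n -> A) -> A) : operation A :=
  existT (fun n => ('I_n -> A) -> A) n f.

Definition snoc (A : Type) (n : nat) (a : 'I_n -> A) (b : A) : 'I_n.+1 -> A :=
  fun i => if unlift ord_max i is Some j then a j else b.

Definition is_clone (A : Type) (F : operation A -> Prop) : Prop :=
  (forall (n : nat) (i : 'I_n), F (mk_op (fun a : 'I_n -> A => a i))) /\
  (forall (n k : nat) (f : ('I_n -> A) -> A) (g : 'I_n -> ('I_k -> A) -> A),
      F (mk_op f) -> (forall i, F (mk_op (g i))) ->
      F (mk_op (fun a : 'I_k -> A => f (fun i => g i a)))) /\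
  (forall (n : nat) (f : ('I_n.+1 -> A) -> A) (g : ('I_n -> A) -> A),
      F (mk_op f) ->
      (forall a b b', f (snoc a b) = f (snoc a b')) ->
      (forall a b, g a = f (snoc a b)) ->
      F (mk_op g)).

Definition subclone_of (A : Type) (F : operation A -> Prop)
    (G : operation A -> Prop) : Prop :=
  (forall o, G o -> F o) /\ is_clone G.

(* Sequences s in A^omega, omega = {1,2,...}, are represented as s : nat -> A,
   with s_(i+1) represented by s i (0-based indexing). *)

Definition blockfun (A : Type) : Type := (nat -> A) -> A.

Definition top_ext (A : Type) (n : nat) (f : ('I_n -> A) -> A) : blockfun A :=
  fun s => f (fun i : 'I_n => s (nat_of_ord i)).

Definition in_full_block (A : Type) (phi : blockfun A) : Prop :=
  exists (n : nat) (f : ('I_n -> A) -> A), phi = top_ext f.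

(* nullary operation e_(i+1) *)
Definition block_e (A : Type) (i : nat) : blockfun A := fun s => s i.

Definition replace_first (A : Type) (n : nat) (s : nat -> A) (b : 'I_n -> A)
  : nat -> A :=
  fun j => match ltnP j n with
           | LtnNotGeq h => b (Ordinal h)
           | _ => s j
           end.

Definition block_q (A : Type) (n : nat) (phi : blockfun A)
    (psi : 'I_n -> blockfun A) : blockfun A :=
  fun s => phi (replace_first s (fun i => psi i s)).

Definition closed_block_ops (A : Type) (S : blockfun A -> Prop) : Prop :=
  (forall i : nat, S (block_e i)) /\
  (forall (n : nat) (phi : blockfun A) (psi : 'I_n -> blockfun A),
      S phi -> (forall i, S (psi i)) -> S (block_q phi psi)).

Definition is_block_algebra (A : Type) (B : blockfun A -> Prop) : Prop :=
  (forall phi, B phi -> in_full_block phi) /\ closed_block_ops B.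

Definition subalgebra_of (A : Type) (B : blockfun A -> Prop)
    (S : blockfun A -> Prop) : Prop :=
  (forall phi, S phi -> B phi) /\ closed_block_ops S.

(* L is isomorphic to the lattice of all sets X (of elements of T) with
   P X, ordered by inclusion: a bijection onto {X | P X} which preserves
   and reflects the order (for lattices this is a lattice isomorphism). *)
Definition iso_to_inclusion_lattice (d : Order.disp_t) (L : latticeType d)
    (T : Type) (P : (T -> Prop) -> Prop) : Prop :=
  exists phi : L -> (T -> Prop),
    (forall x, P (phi x)) /\
    (forall X, P X -> exists x, phi x = X) /\
    (forall x y, (x <= y)%O <-> (forall t, phi x t -> phi y t)).

From mathcomp Require Import all_boot all_order.
From Stdlib Require Import FunctionalExtensionality PropExtensionality.
Set Implicit Arguments. Unset Strict Implicit. Unset Printing Implicit Defensive.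

(* G |-> {f^T | f in G} maps the clones on A onto the block algebras on A,
   preserving inclusion, with inverse S |-> {f | f^T in S}: projections become
   the e_i, composition becomes q_n, and restriction is invisible on top
   extensions.  The one point needing an argument is that a clone containing g
   contains every f with f^T = g^T: dummy arguments are added by composing with
   projections and removed one at a time by restriction.  Hence Sb(F) is
   isomorphic to Sub(F^T) for a clone F, and Sub(B) to Sb({f | f^T in B}) for a
   block algebra B. *)

Section TopExtension.
Variable A : Type.

Definition widen_op m n (H : m <= n) (f : ('I_m -> A) -> A) : ('I_n -> A) -> A :=
  fun a => f (fun i => a (widen_ord H i)).

Definition pad_seq n (a : 'I_n -> A) (x : A) : nat -> A :=
  fun j => if insub j : option 'I_n is Some i then a i else x.

Lemma top_ext_pad n (f : ('I_n -> A) -> A) a x : top_ext f (pad_seq a x) = f a.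
Proof. by congr f; apply: functional_extensionality => i; rewrite /pad_seq valK. Qed.

Lemma top_ext_inj n (f g : ('I_n -> A) -> A) : top_ext f = top_ext g -> f = g.
Proof.
move=> efg; apply: functional_extensionality => a.
(* [f a] is a padding value that exists even when A is empty. *)
by rewrite -(top_ext_pad f a (f a)) efg top_ext_pad.
Qed.

Lemma top_ext_snoc n (f : ('I_n.+1 -> A) -> A) s :
  top_ext f s = f (snoc (fun i : 'I_n => s i) (s n)).
Proof.
congr f; apply: functional_extensionality => i; rewrite /snoc.
by case: unliftP => [j ->|->]; rewrite ?lift_max.
Qed.

Lemma snoc_widen n (a : 'I_n -> A) b i : snoc a b (widen_ord (leqnSn n) i) = a i.
Proof.
have -> : widen_ord (leqnSn n) i = lift ord_max i.
  by apply: val_inj; rewrite /= /bump leqNgt ltn_ord.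
by rewrite /snoc liftK.
Qed.

Lemma replace_firstE n s (b : 'I_n -> A) j :
  replace_first s b j = if insub j : option 'I_n is Some i then b i else s j.
Proof.
rewrite /replace_first; case: ltnP => h; first by rewrite insubT.
by rewrite insubF // ltnNge h.
Qed.

Lemma top_ext_comp n k (f : ('I_n -> A) -> A) (g : 'I_n -> ('I_k -> A) -> A) :
  top_ext (fun a : 'I_k -> A => f (fun i => g i a))
  = block_q (top_ext f) (fun i => top_ext (g i)).
Proof.
apply: functional_extensionality => s; congr f.
by apply: functional_extensionality => i; rewrite replace_firstE valK.
Qed.

Lemma block_q_top_ext K (f : ('I_K -> A) -> A) n (psi : 'I_n -> blockfun A) :
  block_q (top_ext f) psi
  = block_q (top_ext f)
      (fun j : 'I_K =>
         if insub (val j) : option 'I_n is Some i then psi i else block_e j).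
Proof.
apply: functional_extensionality => s; congr f.
apply: functional_extensionality => j; rewrite !replace_firstE valK.
by case: insub.
Qed.

End TopExtension.

Section CloneArity.
Variables (A : Type) (G : operation A -> Prop).
Hypothesis cloneG : is_clone G.

Lemma clone_proj n (i : 'I_n) : G (mk_op (fun a : 'I_n -> A => a i)).
Proof. by case: cloneG => proj _; apply: proj. Qed.

Lemma clone_comp n k (f : ('I_n -> A) -> A) (g : 'I_n -> ('I_k -> A) -> A) :
  G (mk_op f) -> (forall i, G (mk_op (g i))) ->
  G (mk_op (fun a : 'I_k -> A => f (fun i => g i a))).
Proof. by case: cloneG => _ [comp _]; apply: comp. Qed.

Lemma clone_widen_op m n (H : m <= n) (f : ('I_m -> A) -> A) :
  G (mk_op f) -> G (mk_op (widen_op H f)).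
Proof. by move=> Gf; apply: clone_comp => // i; apply: clone_proj. Qed.

Lemma clone_drop_last n (f : ('I_n -> A) -> A) :
  G (mk_op (widen_op (leqnSn n) f)) -> G (mk_op f).
Proof.
have Ef a b : widen_op (leqnSn n) f (snoc a b) = f a.
  by congr f; apply: functional_extensionality => i; rewrite snoc_widen.
case: cloneG => _ [_ restr] Gf; apply: (restr n _ f Gf) => [a b b'|a b].
  by rewrite !Ef.
by rewrite Ef.
Qed.

Lemma clone_narrow_op d n (f : ('I_n -> A) -> A) :
  G (mk_op (widen_op (leq_addl d n) f)) -> G (mk_op f).
Proof.
elim: d => [|d IHd] Gf.
  by congr (G (mk_op _)): Gf; apply: top_ext_inj.
by apply: IHd; apply: clone_drop_last; congr (G (mk_op _)): Gf; apply: top_ext_inj.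
Qed.

Lemma clone_top_ext_closed m n (g : ('I_m -> A) -> A) (f : ('I_n -> A) -> A) :
  G (mk_op g) -> top_ext g = top_ext f -> G (mk_op f).
Proof.
move=> Gg egf; apply: (@clone_narrow_op m).
have: G (mk_op (widen_op (leq_addr n m) g)) by apply: clone_widen_op.
by congr (G (mk_op _)); apply: top_ext_inj.
Qed.

End CloneArity.

Section TopImage.
Variable A : Type.

Definition top_image (G : operation A -> Prop) : blockfun A -> Prop :=
  fun phi => exists2 o, G o & phi = top_ext (projT2 o).

Definition top_preimage (S : blockfun A -> Prop) : operation A -> Prop :=
  fun o => S (top_ext (projT2 o)).

Lemma top_image_full G phi : top_image G phi -> in_full_block phi.
Proof. by case=> -[n f] _ ->; exists n, f. Qed.

Lemma top_image_sub G G' : (forall o, G o -> G' o) ->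
  forall phi, top_image G phi -> top_image G' phi.
Proof. by move=> sGG' phi [o /sGG' G'o ->]; exists o. Qed.

Lemma top_preimage_clone S : closed_block_ops S -> is_clone (top_preimage S).
Proof.
case=> Se Sq; split; [|split].
- by move=> n i; apply: Se.
- by move=> n k f g Sf Sg; rewrite /top_preimage /= top_ext_comp; apply: Sq.
- move=> n f g Sf _ Eg; congr S: Sf; apply: functional_extensionality => s.
  by rewrite /= top_ext_snoc -Eg.
Qed.

Lemma top_preimageK G : is_clone G -> forall o, top_preimage (top_image G) o <-> G o.
Proof.
move=> cloneG [n f]; split; last by exists (mk_op f).
by case=> -[m g] Gg /esym; apply: clone_top_ext_closed.
Qed.

Lemma top_imageK S : (forall phi, S phi -> in_full_block phi) ->
  forall phi, top_image (top_preimage S) phi <-> S phi.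
Proof.
move=> fullS phi; split; first by case=> o So ->.
move=> Sphi; have [n [f Ephi]] := fullS _ Sphi.
by exists (mk_op f); rewrite // /top_preimage /= -Ephi.
Qed.

Section CloneImage.
Variable G : operation A -> Prop.
Hypothesis cloneG : is_clone G.

Lemma top_image_common_arity n (psi : 'I_n -> blockfun A) :
  (forall i, top_image G (psi i)) ->
  exists K (g : 'I_n -> ('I_K -> A) -> A),
    forall i, G (mk_op (g i)) /\ psi i = top_ext (g i).
Proof.
move=> /fin_all_exists2[o Go Epsi].
have leK i : projT1 (o i) <= \max_j projT1 (o j) by apply: leq_bigmax.
exists (\max_j projT1 (o j)), (fun i => widen_op (leK i) (projT2 (o i))) => i.
rewrite Epsi; case: (o i) (Go i) (leK i) => k f Gf lek.
by split=> //; apply: (clone_widen_op cloneG).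
Qed.

Lemma top_image_closed : closed_block_ops (top_image G).
Proof.
split=> [i|n _ psi [[K f] Gf ->] Gpsi].
  by exists (mk_op (fun a : 'I_i.+1 -> A => a ord_max)) => //; apply: (clone_proj cloneG).
rewrite /= block_q_top_ext.
set psi' := fun j : 'I_K => _.
have Gpsi' j : top_image G (psi' j).
  rewrite /psi'; case: insub => [i|]; first exact: Gpsi.
  by exists (mk_op (fun a : 'I_j.+1 -> A => a ord_max)) => //; apply: (clone_proj cloneG).
have [k [g Gg]] := top_image_common_arity Gpsi'.
have -> : psi' = fun j => top_ext (g j).
  by apply: functional_extensionality => j; case: (Gg j).
rewrite -top_ext_comp; exists (mk_op (fun a : 'I_k -> A => f (fun j => g j a))) => //.
by apply: (clone_comp cloneG) => // j; case: (Gg j).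
Qed.

End CloneImage.
End TopImage.

Section Correspondence.
Variable A : Type.

Lemma top_image_subclone (F G : operation A -> Prop) :
  subclone_of F G -> subalgebra_of (top_image F) (top_image G).
Proof. by case=> sGF cloneG; split; [apply: top_image_sub | apply: top_image_closed]. Qed.

Lemma top_preimage_subalgebra_image (F : operation A -> Prop) S :
  is_clone F -> subalgebra_of (top_image F) S -> subclone_of F (top_preimage S).
Proof.
move=> cloneF [sSF closedS]; split; last exact: top_preimage_clone.
by move=> o /sSF; rewrite -/(top_preimage _ o) top_preimageK.
Qed.

Lemma top_preimage_subalgebra (B S : blockfun A -> Prop) :
  subalgebra_of B S -> subclone_of (top_preimage B) (top_preimage S).
Proof. by case=> sSB closedS; split; [move=> o /sSB | apply: top_preimage_clone]. Qed.

Lemma top_image_subclone_preimage B (G : operation A -> Prop) :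
  subclone_of (top_preimage B) G -> subalgebra_of B (top_image G).
Proof.
by case=> sGB cloneG; split=> [phi [o /sGB Bo ->] // |]; apply: top_image_closed.
Qed.

End Correspondence.

Section InclusionIso.
Variables (T T' : Type) (P : (T -> Prop) -> Prop) (P' : (T' -> Prop) -> Prop).
Variables (Phi : (T -> Prop) -> T' -> Prop) (Psi : (T' -> Prop) -> T -> Prop).
Hypotheses (P_Phi : forall X, P X -> P' (Phi X)) (P_Psi : forall Y, P' Y -> P (Psi Y)).
Hypothesis PhiK : forall X, P X -> forall t, Psi (Phi X) t <-> X t.
Hypothesis PsiK : forall Y, P' Y -> forall t, Phi (Psi Y) t <-> Y t.
Hypothesis Phi_mono :
  forall X X', (forall t, X t -> X' t) -> forall t, Phi X t -> Phi X' t.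
Hypothesis Psi_mono :
  forall Y Y', (forall t, Y t -> Y' t) -> forall t, Psi Y t -> Psi Y' t.

Lemma iso_to_inclusion_lattice_transfer d (L : latticeType d) :
  iso_to_inclusion_lattice L P -> iso_to_inclusion_lattice L P'.
Proof.
case=> phi [Pphi [phi_onto phi_iso]].
exists (fun x => Phi (phi x)); split=> [x|]; first exact: P_Phi.
split=> [Y P'Y | x y].
  have [x ex] := phi_onto _ (P_Psi P'Y); exists x; rewrite ex.
  apply: functional_extensionality => t; apply: propositional_extensionality.
  exact: PsiK.
split=> [/phi_iso | le_xy]; first exact: Phi_mono.
apply/phi_iso => t /(PhiK (Pphi x)) Psi_x_t; apply/(PhiK (Pphi y)).
exact: Psi_mono le_xy t Psi_x_t.
Qed.

End InclusionIso.

Lemma subclone_lattice_iso_top_image d (L : latticeType d) A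
    (F : operation A -> Prop) :
  is_clone F -> iso_to_inclusion_lattice L (subclone_of F) ->
  iso_to_inclusion_lattice L (subalgebra_of (top_image F)).
Proof.
move=> cloneF.
apply: (iso_to_inclusion_lattice_transfer (Phi := @top_image A) (Psi := @top_preimage A)).
- by move=> G; apply: top_image_subclone.
- by move=> S; apply: top_preimage_subalgebra_image.
- by move=> G [_ cloneG]; apply: top_preimageK.
- by move=> S [sSF _]; apply: top_imageK => phi /sSF; apply: top_image_full.
- exact: top_image_sub.
- by move=> S S' sSS' o; apply: sSS'.
Qed.

Lemma subalgebra_lattice_iso_top_preimage d (L : latticeType d) A
    (B : blockfun A -> Prop) :
  is_block_algebra B -> iso_to_inclusion_lattice L (subalgebra_of B) ->
  iso_to_inclusion_lattice L (subclone_of (top_preimage B)).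
Proof.
case=> fullB _.
apply: (iso_to_inclusion_lattice_transfer (Phi := @top_preimage A) (Psi := @top_image A)).
- by move=> S; apply: top_preimage_subalgebra.
- by move=> G; apply: top_image_subclone_preimage.
- by move=> S [sSB _]; apply: top_imageK => phi /sSB; apply: fullB.
- by move=> G [_ cloneG]; apply: top_preimageK.
- by move=> S S' sSS' o; apply: sSS'.
- exact: top_image_sub.
Qed.

Theorem proposition10p8 (d : Order.disp_t) (L : latticeType d) :
  (exists (A : Type) (F : operation A -> Prop),
      is_clone F /\ iso_to_inclusion_lattice L (subclone_of F)) <->
  (exists (A : Type) (B : blockfun A -> Prop),
      is_block_algebra B /\ iso_to_inclusion_lattice L (subalgebra_of B)).
Proof.
split=> [[A [F [cloneF isoF]]] | [A [B [blockB isoB]]]].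
- exists A, (top_image F); split; last exact: subclone_lattice_iso_top_image.
  by split; [apply: top_image_full | apply: top_image_closed].
- exists A, (top_preimage B); split; last exact: subalgebra_lattice_iso_top_preimage.
  by case: blockB => _; apply: top_preimage_clone.
Qed.
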